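(* Let $G$ be a graph on $K$ vertices and let $m$ satisfy $3\le m\le K$. If the average degree of $G$ is at least $m$, then $G$ contains a connected-matching on at least $m$ vertices.
   Context: A matching is a set of pairwise vertex-disjoint edges; its number of vertices is twice its number of edges. A connected-matching is a matching all of whose edges lie in the same connected component of $G$. *)

(* A finite simple graph is a symmetric irreflexive relation
   [e : rel T] on a finite type [T]; its vertex count is #|T|. *)
From mathcomp Require Import all_boot.
Set Implicit Arguments. Unset Strict Implicit. Unset Printing Implicit Defensive.

Definition deg (T : finType) (e : rel T) (x : T) : nat := #|[set y | e x y]|.

Definition match_vertices (T : finType) (M : seq (T * T)) : seq T :=
  flatten [seq [:: p.1; p.2] | p <- M].

(* a matching: every pair is an edge of G, and all endpoints are pairwise
   distinct (so the edges are pairwise vertex-disjoint, and no edge is listed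
   twice); its number of vertices is 2 * size M. *)
Definition is_matching (T : finType) (e : rel T) (M : seq (T * T)) : Prop :=
  all (fun p => e p.1 p.2) M /\ uniq (match_vertices M).

(* a connected-matching: a matching all of whose edges lie in the same
   connected component of G (connect e = reflexive-transitive closure). *)
Definition is_connected_matching (T : finType) (e : rel T) (M : seq (T * T)) : Prop :=
  is_matching e M /\
  forall p q, p \in M -> q \in M -> connect e p.1 q.1.

From mathcomp Require Import all_boot zify.
From Stdlib Require Import Classical.
Set Implicit Arguments. Unset Strict Implicit. Unset Printing Implicit Defensive.

(* Since the average degree is at least m, so is the average degree of some connected
   component C.  Let M be a maximum matching inside C, with matched vertices V and
   unmatched vertices U = C \ V.  By maximality U is independent, and the two ends of an
   edge of M have at most |U| + 1 neighbours in U (counted with multiplicity), since two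
   distinct private neighbours a ~ u, b ~ v of an edge uv of M would give an augmenting
   path a u v b.  Counting the V-U edges from both sides, the degree sum over C is
   at most |M| * 2|C|, hence m <= 2|M|. *)

Lemma ex_maximizer (A : Type) (P : A -> Prop) (f : A -> nat) (B : nat) (a0 : A) :
  P a0 -> (forall a, P a -> f a <= B) ->
  exists2 a, P a & forall b, P b -> f b <= f a.
Proof.
move=> Pa0 bounded; have [k] := ubnP (B - f a0).
elim: k a0 Pa0 => // k IHk a Pa lt_k.
have [[b Pb lt_ab] | maximal] := classic (exists2 b, P b & f a < f b).
  by apply: (IHk b Pb); have := bounded b Pb; lia.
exists a => // b Pb; rewrite leqNgt; apply/negP => lt_ab.
by apply: maximal; exists b.
Qed.

Lemma exists_leq_sum (I : finType) (P : pred I) (a b : I -> nat) :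
  (exists i, P i) -> \sum_(i | P i) b i <= \sum_(i | P i) a i ->
  exists2 i, P i & b i <= a i.
Proof.
move=> [i0 Pi0] le_ba; apply: NNPP => none.
have lt_ab i : P i -> a i < b i.
  by move=> Pi; rewrite ltnNge; apply/negP => le_i; apply: none; exists i.
move: le_ba; rewrite (bigD1 i0) //= [X in _ <= X](bigD1 i0) //=.
have le_rest : \sum_(i | P i && (i != i0)) a i <= \sum_(i | P i && (i != i0)) b i.
  by apply: leq_sum => i /andP [Pi _]; apply/ltnW/lt_ab.
by have := lt_ab i0 Pi0; lia.
Qed.

Lemma exists_dense_component (T : finType) (e : rel T) (w : T -> nat) (m : nat) :
  connect_sym e -> 0 < #|T| -> m * #|T| <= \sum_x w x ->
  exists r, m * #|[set x | connect e r x]| <= \sum_(x in [set x | connect e r x]) w x.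
Proof.
move=> csym /card_gt0P [x0 _] dense.
have by_component F :
    \sum_x F x = \sum_(r | roots e r) \sum_(x in [set x | connect e r x]) F x.
  rewrite (partition_big (root e) (roots e)) => [|x _]; last exact: roots_root.
  apply: eq_bigr => r /eqP rootr; apply: eq_bigl => x.
  by rewrite inE /= -{1}rootr eq_sym; apply/eqP/rootP.
have nonempty : exists r, roots e r by exists (root e x0); apply: roots_root.
have [|r _ dense_r] := exists_leq_sum nonempty
  (b := fun r => m * #|[set x | connect e r x]|)
  (a := fun r => \sum_(x in [set x | connect e r x]) w x).
  rewrite -by_component; apply: leq_trans dense; rewrite mulnC -sum_nat_const by_component.
  by apply: leq_sum => r _; rewrite sum_nat_const mulnC.
by exists r.
Qed.

Lemma perm_move2_front (A : eqType) (s1 s2 : seq A) a b x y :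
  perm_eq (s1 ++ [:: a, x, y, b & s2]) (a :: b :: s1 ++ [:: x, y & s2]).
Proof. by apply/permP => q; rewrite /= !count_cat /=; lia. Qed.

Section Matchings.
Variables (T : finType) (e : rel T).
Hypotheses (esym : symmetric e) (eirr : irreflexive e).

Local Notation mv := (@match_vertices T).

Lemma match_vertices_cons p M : mv (p :: M) = p.1 :: p.2 :: mv M.
Proof. by []. Qed.

Lemma match_vertices_cat M1 M2 : mv (M1 ++ M2) = mv M1 ++ mv M2.
Proof. by rewrite /match_vertices map_cat flatten_cat. Qed.

Lemma size_match_vertices M : size (mv M) = 2 * size M.
Proof. by elim: M => //= p M IH; rewrite IH mulnS. Qed.

Lemma mem_match_vertices p M : p \in M -> (p.1 \in mv M) && (p.2 \in mv M).
Proof.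
elim: M => //= q M IH; rewrite match_vertices_cons !inE => /orP [/eqP-> | /IH].
  by rewrite !eqxx orbT.
by case/andP => -> ->; rewrite !orbT.
Qed.

Lemma sum_match_vertices (g : T -> nat) M :
  \sum_(x <- mv M) g x = \sum_(p <- M) (g p.1 + g p.2).
Proof.
by rewrite big_flatten big_map; apply: eq_bigr => p _; rewrite big_cons big_seq1.
Qed.

Definition nbhd x := [set y | e x y].

Lemma card_nbhdI x (B : {set T}) : #|nbhd x :&: B| = \sum_(y in B) e x y.
Proof.
rewrite -sum1_card [LHS]big_mkcond [RHS]big_mkcond; apply: eq_bigr => y _.
by rewrite !inE andbC; case: (y \in B); case: (e x y).
Qed.

Lemma sum_card_nbhdI (A B : {set T}) :
  \sum_(x in A) #|nbhd x :&: B| = \sum_(y in B) #|nbhd y :&: A|.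
Proof.
under eq_bigr do rewrite card_nbhdI; rewrite exchange_big.
by apply: eq_bigr => y _; rewrite card_nbhdI; apply: eq_bigr => x _; rewrite esym.
Qed.

Lemma card_nbhdI_lt x (A : {set T}) : x \in A -> #|nbhd x :&: A| < #|A|.
Proof.
move=> xA; apply/proper_card/properP; split; first exact: subsetIr.
by exists x; rewrite // !inE eirr.
Qed.

Variable C : {set T}.

Definition matching_in M := is_matching e M /\ {subset mv M <= C}.

Lemma matching_in_size M : matching_in M -> size M <= #|T|.
Proof.
case=> [[_ uniqM] _]; have := max_card (mem (mv M)).
by rewrite (card_uniqP uniqM) size_match_vertices; lia.
Qed.

Lemma exists_maximum_matching_in :
  exists2 M, matching_in M & forall M', matching_in M' -> size M' <= size M.
Proof. by apply: (ex_maximizer (a0 := [::])) matching_in_size. Qed.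

Lemma matching_in_cons M x y : matching_in M -> x \in C -> y \in C ->
  x \notin mv M -> y \notin mv M -> e x y -> matching_in ((x, y) :: M).
Proof.
case=> [[edgesM uniqM] inC] xC yC xM yM exy; split; first split.
- by rewrite /= exy.
- rewrite match_vertices_cons /= inE negb_or xM yM uniqM !andbT.
  by apply: contraTneq exy => ->; rewrite eirr.
- by move=> z; rewrite match_vertices_cons !inE => /or3P [/eqP-> | /eqP-> | /inC].
Qed.

(* Replacing [p] by [(a, p.1)] and [(p.2, b)] flips the augmenting path a - p.1 - p.2 - b. *)
Lemma matching_in_reroute M p a b : matching_in M -> p \in M -> a \in C -> b \in C ->
  a \notin mv M -> b \notin mv M -> a != b -> e p.1 a -> e p.2 b ->
  exists2 M', matching_in M' & size M' = (size M).+1.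
Proof.
case=> [[edgesM uniqM] inC] pM aC bC aM bM neq_ab ea eb.
case/splitPr: pM edgesM uniqM inC aM bM => M1 M2 edgesM uniqM inC aM bM.
exists (M1 ++ (a, p.1) :: (p.2, b) :: M2); last by rewrite !size_cat /= addnS.
have perm_mv : perm_eq (mv (M1 ++ (a, p.1) :: (p.2, b) :: M2)) (a :: b :: mv (M1 ++ p :: M2)).
  by rewrite !match_vertices_cat !match_vertices_cons; apply: perm_move2_front.
split; first split.
- move: edgesM; rewrite !all_cat /= => /andP [-> /andP [_ ->]].
  by rewrite esym ea eb.
- by rewrite (perm_uniq perm_mv) /= inE negb_or neq_ab aM bM uniqM.
- by move=> z; rewrite (perm_mem perm_mv) !inE => /or3P [/eqP-> | /eqP-> | /inC].
Qed.

Hypothesis C_closed : forall x y, x \in C -> e x y -> y \in C.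

Section MaximumMatching.
Variable M : seq (T * T).
Hypotheses (matchM : matching_in M) (maxM : forall M', matching_in M' -> size M' <= size M).

Let V := [set x in mv M].
Let U := C :\: V.

Lemma matched_sub : V \subset C.
Proof. by apply/subsetP => x; rewrite inE; case: matchM => _; apply. Qed.

Lemma nbhd_unmatched_sub x : x \in U -> nbhd x \subset V.
Proof.
case/setDP => xC; rewrite inE => xM; apply/subsetP => y; rewrite !inE => exy.
apply/negPn/negP => yM.
by have := maxM (matching_in_cons matchM xC (C_closed xC exy) xM yM exy); rewrite /=; lia.
Qed.

Lemma card_nbhd_matched_pair p : p \in M ->
  #|nbhd p.1 :\: V| + #|nbhd p.2 :\: V| <= #|U| + 1.
Proof.
move=> pM; have /andP [p1V p2V] : (p.1 \in V) && (p.2 \in V).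
  by rewrite !inE; apply: mem_match_vertices.
have inU x y : x \in V -> y \in nbhd x :\: V -> y \in U.
  move=> xV /setDP []; rewrite inE => exy yV.
  by rewrite inE yV (C_closed (subsetP matched_sub x xV) exy).
rewrite -cardsUI; apply: leq_add.
  by apply/subset_leq_card/subsetP => y /setUP []; [apply: inU p1V | apply: inU p2V].
rewrite leqNgt; apply/negP => /card_gt1P [a [b [/setIP [aN1 _] /setIP [_ bN2] neq_ab]]].
have /setDP [aC _] := inU _ _ p1V aN1; have /setDP [bC _] := inU _ _ p2V bN2.
move: aN1 bN2; rewrite !inE => /andP [aM ea] /andP [bM eb].
have [M' M'_in size_M'] := matching_in_reroute matchM pM aC bC aM bM neq_ab ea eb.
by have := maxM M'_in; rewrite size_M' ltnn.
Qed.

Lemma sum_deg_matched :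
  \sum_(x in C) deg e x = \sum_(y in V) (#|nbhd y :&: V| + 2 * #|nbhd y :\: V|).
Proof.
have degU x : x \in U -> deg e x = #|nbhd x :&: V|.
  by move/nbhd_unmatched_sub/setIidPl => ->.
have outV y : y \in V -> #|nbhd y :&: U| = #|nbhd y :\: V|.
  move=> yV; apply: eq_card => z; rewrite !inE.
  case: (boolP (e y z)) => eyz; rewrite ?andbF //=.
  by rewrite (C_closed (subsetP matched_sub y yV) eyz) andbT.
rewrite (big_setID V) /= (setIidPr matched_sub) (eq_bigr _ degU) sum_card_nbhdI.
rewrite (eq_bigr _ outV) -big_split /=; apply: eq_bigr => y _.
by rewrite -[deg e y](cardsID V (nbhd y)); lia.
Qed.

Lemma sum_deg_le_maximum_matching : \sum_(x in C) deg e x <= size M * (2 * #|C|).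
Proof.
have uniqM : uniq (mv M) by case: matchM => [[]].
have bound_pair p : p \in M ->
    #|nbhd p.1 :&: V| + 2 * #|nbhd p.1 :\: V| + (#|nbhd p.2 :&: V| + 2 * #|nbhd p.2 :\: V|)
      <= 2 * #|C|.
  move=> pM; have /andP [p1V p2V] : (p.1 \in V) && (p.2 \in V).
    by rewrite !inE; apply: mem_match_vertices.
  have := card_nbhdI_lt p1V; have := card_nbhdI_lt p2V.
  have := card_nbhd_matched_pair pM.
  by rewrite -(cardsID V C) (setIidPr matched_sub) -/U; lia.
rewrite sum_deg_matched (eq_bigl (mem (mv M))) => [|y]; last by rewrite inE.
rewrite -big_uniq // sum_match_vertices.
apply: (@leq_trans (\sum_(p <- M) 2 * #|C|)).
  by rewrite big_seq_cond [X in _ <= X]big_seq_cond; apply: leq_sum => p /andP [/bound_pair].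
by rewrite big_const_seq count_predT iter_addn_0 mulnC.
Qed.

End MaximumMatching.
End Matchings.

Theorem corollary7p9 (T : finType) (e : rel T) (K m : nat) :
  symmetric e -> irreflexive e -> #|T| = K -> 3 <= m <= K ->
  m * K <= \sum_(x : T) deg e x ->
  exists M : seq (T * T), is_connected_matching e M /\ m <= 2 * size M.
Proof.
move=> esym eirr <- /andP [m_ge3 m_leK] dense.
have csym := sym_connect_sym esym.
have [|r dense_r] := exists_dense_component csym _ dense; first lia.
set C := [set x | connect e r x] in dense_r.
have C_closed x y : x \in C -> e x y -> y \in C.
  by rewrite !inE => rx /connect1; apply: connect_trans.
have [M [matchM inC] maxM] := exists_maximum_matching_in e C.
exists M; split.
  split=> // p q /mem_match_vertices/andP [/inC + _] /mem_match_vertices/andP [/inC + _].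
  by rewrite !inE => rp rq; apply: connect_trans rq; rewrite csym.
have C_gt0 : 0 < #|C| by apply/card_gt0P; exists r; rewrite inE connect0.
have := leq_trans dense_r (sum_deg_le_maximum_matching esym eirr C_closed (conj matchM inC) maxM).
by rewrite mulnA (mulnC _ 2) leq_pmul2r.
Qed.
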